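(* Let $F,\theta \geq 1$ be integers and let $\eta_0(x)$, $x \in \mathbb{Z}$, be i.i.d. uniform on $\{0,1\}^F$. For each edge $e = (x,x+1)$ let $\zeta_0(e) = H(\eta_0(x),\eta_0(x+1))$, let $(X_e)_e$ be random variables which, conditionally on $\eta_0$, are independent with $X_e$ Bernoulli with success probability $1 - \zeta_0(e)/F$, and set $\phi(e) = -\zeta_0(e)$ if $\zeta_0(e) \leq \theta$ and $\phi(e) = \zeta_0(e) + 2(X_e - \theta)$ if $\zeta_0(e) > \theta$. Then there exist $C_1 < \infty$ and $c_1 > 0$ such that for all $\epsilon > 0$ and all $N \geq 1$, $$P\Big(\sum_{e \in (-N,0)} \phi(e) \leq N(E\phi(e) - \epsilon)\Big) \leq C_1 \exp(-c_1 N \epsilon^2).$$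
   Context: $H(u,v) = \#\{i : u_i \neq v_i\}$ is the Hamming distance on $\{0,1\}^F$. Edges $(x,x+1)$ of $\mathbb{Z}$ are identified with their midpoints $x+1/2$, so $e \in (-N,0)$ ranges over the $N$ edges $(x,x+1)$ with $x = -N,\ldots,-1$. $E\phi(e)$ does not depend on $e$. *)

From HB Require Import structures.
From mathcomp Require Import all_boot all_order all_algebra.
From mathcomp Require Import reals.
From mathcomp Require Import sequences.
Unset Printing Implicit Defensive.
Import Order.TTheory GRing.Theory Num.Theory.
Local Open Scope ring_scope.

Definition word (F : nat) := {ffun 'I_F -> bool}.

Definition hamming {F : nat} (u v : word F) : nat := #|[set i | u i != v i]|.

(* Configuration eta_0 restricted to the sites x = -N, ..., 0:
   site index i : 'I_N.+1 stands for x = i - N. *)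
Definition config (F N : nat) := {ffun 'I_N.+1 -> word F}.

(* zeta_0 of the edge e_j = (x, x+1) with x = j - N, j : 'I_N,
   i.e. edge between site indices j and j+1. *)
Definition zeta {F N : nat} (eta : config F N) (j : 'I_N) : nat :=
  hamming (eta (inord j)) (eta (inord j.+1)).

Definition phi_val (R : realType) (theta z : nat) (x : bool) : R :=
  if (z <= theta)%N then - (z%:R) else z%:R + 2 * ((x : nat)%:R - theta%:R).

Definition bern_w (R : realType) (F z : nat) (x : bool) : R :=
  if x then 1 - z%:R / F%:R else z%:R / F%:R.

Definition unif_w (R : realType) (F : nat) : R := (2 ^+ F)^-1.

Definition Ephi (R : realType) (F theta : nat) : R :=
  \sum_(u : word F) \sum_(v : word F) \sum_(x : bool)
     unif_w R F * unif_w R F * bern_w R F (hamming u v) x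
       * phi_val R theta (hamming u v) x.

Definition phi_sum (R : realType) (F theta N : nat)
    (eta : config F N) (X : {ffun 'I_N -> bool}) : R :=
  \sum_(j < N) phi_val R theta (zeta eta j) (X j).

(* P( sum_{e in (-N,0)} phi(e) <= N (E phi - eps) ), computed exactly as the
   sum over the (finitely many) relevant variables eta_0(-N..0), (X_e)_{e in (-N,0)}
   of their joint probability weights. *)
Definition prob_lower_dev (R : realType) (F theta N : nat) (eps : R) : R :=
  \sum_(eta : config F N) \sum_(X : {ffun 'I_N -> bool})
     (\prod_(i < N.+1) unif_w R F) * (\prod_(j < N) bern_w R F (zeta eta j) (X j))
     * (if phi_sum R F theta N eta X <= N%:R * (Ephi R F theta - eps) then 1 else 0).

From HB Require Import structures.
From mathcomp Require Import all_boot all_order all_algebra.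
From mathcomp Require Import reals.
From mathcomp Require Import sequences exp.
From mathcomp Require Import ring lra.
Import Order.TTheory GRing.Theory Num.Theory.
Local Open Scope ring_scope.

(* The increments eta(x) xor eta(x+1) of an i.i.d. uniform configuration are
   again i.i.d. uniform, so the phi(e), e in (-N,0), are i.i.d. with values in
   [-theta, F+2].  The bound is then Chernoff's: for |t| <= 1/2,
   e^t <= 1 + t + 2t^2 gives E e^{lam (E phi - phi)} <= e^{2 (lam M)^2} with
   M = F + 2 + theta, and lam = eps / (4 M^2) yields exponent -N eps^2 / (8 M^2).
   For eps > M the event is empty since phi >= -theta. *)

Lemma expR_le_quadratic {R : realType} (t : R) :
  `|t| <= 1/2 -> expR t <= 1 + t + 2 * t ^+ 2.
Proof.
rewrite ler_norml => /andP[t_ge t_le].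
have e_pos := expR_gt0 t.
have eNt_ge := expR_ge1Dx (- t).
have eeN : expR t * expR (- t) = 1 by rewrite expRxMexpNx_1.
have sq_pos : 0 <= t ^+ 2 * (1 - 2 * t) by rewrite mulr_ge0 ?sqr_ge0 //; lra.
have e1t_le : expR t * (1 - t) <= 1.
  by rewrite -eeN ler_wpM2l //; [exact: ltW | lra].
nra.
Qed.

Lemma ind_le_expR (R : realType) (s a lam : R) : 0 <= lam ->
  (if s <= a then 1 else 0) <= expR (lam * (a - s)).
Proof.
move=> lam_ge0; case: ifP => [s_le|_]; last exact: expR_ge0.
by apply: le_trans (expR_ge1Dx _); rewrite lerDl mulr_ge0 // subr_ge0.
Qed.

Section WeightedAverage.
Variables (R : realType) (I : finType) (w : I -> R).
Hypotheses (w_ge0 : forall i, 0 <= w i) (w_sum1 : \sum_i w i = 1).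

Lemma wavg_bounds (Y : I -> R) (lo hi : R) : (forall i, lo <= Y i <= hi) ->
  lo <= \sum_i w i * Y i <= hi.
Proof.
move=> Y_in; have sum_const c : \sum_i w i * c = c by rewrite -mulr_suml w_sum1 mul1r.
apply/andP; split.
- by rewrite -{1}(sum_const lo) ler_sum // => i _; rewrite ler_wpM2l //; case/andP: (Y_in i).
- by rewrite -(sum_const hi) ler_sum // => i _; rewrite ler_wpM2l //; case/andP: (Y_in i).
Qed.

Lemma centred_mgf_le (Y : I -> R) (lam M : R) :
  let E := \sum_i w i * Y i in
  0 <= lam -> lam * M <= 1/2 -> (forall i, `|E - Y i| <= M) ->
  \sum_i w i * expR (lam * (E - Y i)) <= 1 + 2 * (lam * M) ^+ 2.
Proof.
move=> E lam_ge0 lamM_le Y_near.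
set K := 2 * (lam * M) ^+ 2.
have term_le i : expR (lam * (E - Y i)) <= 1 + lam * (E - Y i) + K.
  have t_le : `|lam * (E - Y i)| <= lam * M.
    by rewrite normrM ger0_norm // ler_wpM2l.
  apply: le_trans (expR_le_quadratic _ (le_trans t_le lamM_le)) _.
  rewrite lerD2l ler_pM2l ?ltr0n //.
  by move: t_le; rewrite ler_norml => /andP[? ?]; nra.
apply: le_trans (_ : \sum_i w i * (1 + lam * (E - Y i) + K) <= _).
  by apply: ler_sum => i _; rewrite ler_wpM2l.
rewrite (eq_bigr (fun i => (1 + K + lam * E) * w i - lam * (w i * Y i))) => [|i _];
  last by ring.
by rewrite sumrB -!mulr_sumr w_sum1 -/E; lra.
Qed.

End WeightedAverage.

Definition pop {F : nat} (v : word F) : nat := #|[set i | v i]|.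
Definition xorw {F : nat} (u v : word F) : word F := [ffun i => u i (+) v i].

Lemma xorwK {F : nat} (u : word F) : cancel (xorw u) (xorw u).
Proof. by move=> v; apply/ffunP => i; rewrite !ffunE; case: (u i); case: (v i). Qed.

Lemma hamming_pop F (u v : word F) : hamming u v = pop (xorw u v).
Proof.
by apply: eq_card => i; rewrite !inE ffunE; case: (u i); case: (v i).
Qed.

Lemma pop_le F (v : word F) : (pop v <= F)%N.
Proof. by apply: leq_trans (max_card _) _; rewrite card_ord. Qed.

Lemma card_word F : #|{: word F}| = (2 ^ F)%N.
Proof. by rewrite card_ffun card_bool card_ord. Qed.

Lemma unif_w_gt0 (R : realType) F : 0 < unif_w R F.
Proof. by rewrite /unif_w invr_gt0 exprn_gt0. Qed.

Lemma sum_unif_w (R : realType) F (c : R) : \sum_(u : word F) unif_w R F * c = c.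
Proof.
rewrite sumr_const card_word -mulr_natr natrX /unif_w mulrAC mulVf ?mul1r //.
by rewrite expf_neq0 // pnatr_eq0.
Qed.

Lemma bern_w_ge0 (R : realType) F z x : (1 <= F)%N -> (z <= F)%N -> 0 <= bern_w R F z x.
Proof.
move=> F_ge1 z_le; have F_gt0 : 0 < (F%:R : R) by rewrite ltr0n.
have : (z%:R : R) / F%:R <= 1 by rewrite ler_pdivrMr // mul1r ler_nat.
have : 0 <= (z%:R : R) / F%:R by rewrite divr_ge0.
rewrite /bern_w; case: x; lra.
Qed.

Lemma phi_val_ge (R : realType) theta z x : - (theta%:R : R) <= phi_val R theta z x.
Proof.
rewrite /phi_val; case: leqP => [z_le|z_gt]; first by rewrite lerN2 ler_nat.
have : (theta%:R + 1 : R) <= z%:R by rewrite natr1 ler_nat.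
have : (0 : R) <= (x : nat)%:R by [].
lra.
Qed.

Lemma phi_val_le (R : realType) F theta z x :
  (z <= F)%N -> phi_val R theta z x <= (F + 2)%:R.
Proof.
move=> z_le; have : (z%:R : R) <= F%:R by rewrite ler_nat.
have : (0 : R) <= theta%:R by [].
have : (0 : R) <= z%:R by [].
have : ((x : nat)%:R : R) <= 1 by case: x.
rewrite natrD /phi_val; case: leqP => _; lra.
Qed.

Section EdgeLaw.
Variables (R : realType) (F theta : nat).
Hypothesis F_ge1 : (1 <= F)%N.

(* Joint law of the increment eta(x) xor eta(x+1) and X_e on one edge. *)
Definition edge_w (p : word F * bool) : R := unif_w R F * bern_w R F (pop p.1) p.2.
Definition edge_phi (p : word F * bool) : R := phi_val R theta (pop p.1) p.2.

Lemma edge_w_ge0 p : 0 <= edge_w p.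
Proof. by rewrite mulr_ge0 ?bern_w_ge0 ?pop_le // ltW ?unif_w_gt0. Qed.

Lemma sum_edge_w (g : word F * bool -> R) :
  \sum_p edge_w p * g p
  = \sum_(v : word F) unif_w R F * \sum_x bern_w R F (pop v) x * g (v, x).
Proof.
under [RHS]eq_bigr do rewrite mulr_sumr.
by rewrite pair_bigA; apply: eq_bigr => -[v x] _; rewrite mulrA.
Qed.

Lemma sum_edge_w1 : \sum_p edge_w p = 1.
Proof.
rewrite -[LHS](eq_bigr _ (fun p _ => mulr1 (edge_w p))) sum_edge_w.
rewrite -[RHS](sum_unif_w R F 1); apply: eq_bigr => v _.
by rewrite big_bool /= !mulr1 /bern_w subrK mulr1.
Qed.

Lemma Ephi_edge : Ephi R F theta = \sum_p edge_w p * edge_phi p.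
Proof.
rewrite sum_edge_w -[RHS](sum_unif_w R F) /Ephi; apply: eq_bigr => u _.
rewrite (reindex_inj (can_inj (xorwK u))) /= mulr_sumr.
apply: eq_bigr => v _; rewrite !mulr_sumr.
by apply: eq_bigr => x _; rewrite hamming_pop xorwK /edge_phi; ring.
Qed.

Lemma edge_phi_bounds p : - (theta%:R : R) <= edge_phi p <= (F + 2)%:R.
Proof. by rewrite phi_val_ge phi_val_le ?pop_le. Qed.

Lemma Ephi_bounds : - (theta%:R : R) <= Ephi R F theta <= (F + 2)%:R.
Proof. by rewrite Ephi_edge; apply: wavg_bounds edge_w_ge0 sum_edge_w1 _ _ _ edge_phi_bounds. Qed.

End EdgeLaw.

Section Increments.
Variables (F N : nat).

Definition increments (eta : config F N) : word F * {ffun 'I_N -> word F} :=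
  (eta ord0, [ffun j : 'I_N => xorw (eta (inord j)) (eta (inord j.+1))]).

Lemma increments_inj : injective increments.
Proof.
move=> e1 e2 [eq0 eq_incr].
have eq_upto i : (i <= N)%N -> e1 (inord i) = e2 (inord i).
  elim: i => [|i IHi] i_le.
    by rewrite (_ : inord 0 = ord0) //; apply/val_inj; rewrite /= inordK.
  have := congr1 (fun d : {ffun 'I_N -> word F} => d (Ordinal i_le)) eq_incr.
  rewrite !ffunE /= => eq_i.
  by rewrite -(xorwK (e1 (inord i)) (e1 (inord i.+1))) eq_i IHi ?xorwK // ltnW.
by apply/ffunP => k; rewrite -(inord_val k); apply: eq_upto; rewrite -ltnS.
Qed.

Lemma increments_bij : bijective increments.
Proof.
apply: inj_card_bij increments_inj _.
by rewrite card_prod !card_ffun card_bool !card_ord expnS.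
Qed.

Lemma zeta_increments (eta : config F N) j : zeta eta j = pop ((increments eta).2 j).
Proof. by rewrite /zeta hamming_pop ffunE. Qed.

Lemma sum_config_prod_zeta (R : realType) (g : nat -> R) :
  \sum_(eta : config F N) (\prod_(i < N.+1) unif_w R F) * \prod_(j < N) g (zeta eta j)
  = (\sum_(v : word F) unif_w R F * g (pop v)) ^+ N.
Proof.
pose G (p : word F * {ffun 'I_N -> word F}) :=
  (\prod_(i < N.+1) unif_w R F) * \prod_(j < N) g (pop (p.2 j)).
transitivity (\sum_(eta : config F N) G (increments eta)).
  apply: eq_bigr => eta _; congr (_ * _); apply: eq_bigr => j _.
  by rewrite zeta_increments.
rewrite -(reindex increments (P := xpredT) (F := G) (onW_bij _ increments_bij)) /=.
rewrite -(pair_bigA _ (fun v d => G (v, d))) /G /=.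
under eq_bigr do rewrite -mulr_sumr -(bigA_distr_bigA (fun j v => g (pop v))) /=.
rewrite !prodr_const !card_ord exprS -mulrA sum_unif_w.
by rewrite -exprMn mulr_sumr.
Qed.

End Increments.

Section Chernoff.
Variables (R : realType) (F theta : nat).
Hypothesis F_ge1 : (1 <= F)%N.

Let E : R := Ephi R F theta.

Definition edge_mgf (lam : R) : R :=
  \sum_p edge_w R F p * expR (lam * (E - edge_phi R F theta p)).

Lemma expR_phi_sum N (eta : config F N) X (lam eps : R) :
  expR (lam * (N%:R * (E - eps) - phi_sum R F theta N eta X))
  = expR (- (lam * N%:R * eps)) *
    \prod_(j < N) expR (lam * (E - phi_val R theta (zeta eta j) (X j))).
Proof.
rewrite -expR_sum -expRD /phi_sum; congr expR.
rewrite -mulr_sumr sumrB sumr_const card_ord -mulr_natl; ring.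
Qed.

Lemma prob_lower_dev_le_mgf N (lam eps : R) : 0 <= lam ->
  prob_lower_dev R F theta N eps <= expR (- (lam * N%:R * eps)) * edge_mgf lam ^+ N.
Proof.
move=> lam_ge0; set c := expR (- (lam * N%:R * eps)).
set P := \prod_(i < N.+1) unif_w R F.
have P_ge0 : 0 <= P by apply: prodr_ge0 => i _; exact: ltW (unif_w_gt0 R F).
have B_ge0 (eta : config F N) X : 0 <= \prod_(j < N) bern_w R F (zeta eta j) (X j).
  by apply: prodr_ge0 => j _; rewrite bern_w_ge0 // zeta_increments pop_le.
apply: le_trans (_ : \sum_(eta : config F N) \sum_(X : {ffun 'I_N -> bool})
   c * (P * \prod_(j < N) (bern_w R F (zeta eta j) (X j) *
          expR (lam * (E - phi_val R theta (zeta eta j) (X j))))) <= _).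
  apply: ler_sum => eta _; apply: ler_sum => X _.
  rewrite big_split /=.
  set Bp := \prod_(j < N) bern_w _ _ _ _; set Ep := \prod_(j < N) expR _.
  rewrite (_ : c * (P * (Bp * Ep)) = P * (Bp * (c * Ep))); last by ring.
  rewrite -mulrA; apply: (ler_wpM2l P_ge0); apply: (ler_wpM2l (B_ge0 eta X)).
  by rewrite /c /Ep -expR_phi_sum; apply: ind_le_expR.
rewrite /edge_mgf sum_edge_w /edge_phi /=.
rewrite -(sum_config_prod_zeta _ _ _
  (fun z => \sum_x bern_w R F z x * expR (lam * (E - phi_val R theta z x)))).
rewrite mulr_sumr; apply: ler_sum => eta _.
by rewrite -!mulr_sumr bigA_distr_bigA mulrA.
Qed.

Lemma edge_phi_dev_le p :
  `|E - edge_phi R F theta p| <= (F + 2 + theta)%:R.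
Proof.
have /andP[Ep_ge Ep_le] := Ephi_bounds R F theta F_ge1.
have /andP[phi_ge phi_le] := edge_phi_bounds R F theta p.
by move: Ep_le phi_le; rewrite /E !natrD ler_norml => *; apply/andP; split; lra.
Qed.

Section Deviation.
Variable M : R.
Hypothesis edge_dev_le : forall p, `|E - edge_phi R F theta p| <= M.

Lemma edge_mgf_le (lam : R) : 0 <= lam -> lam * M <= 1/2 ->
  edge_mgf lam <= 1 + 2 * (lam * M) ^+ 2.
Proof.
move=> lam_ge0 lamM_le; rewrite /edge_mgf /E Ephi_edge.
apply: centred_mgf_le => //.
- exact: edge_w_ge0.
- exact: sum_edge_w1.
- by move=> p; rewrite -Ephi_edge.
Qed.

Lemma prob_lower_dev_small_eps N (eps : R) : 0 < M -> 0 < eps -> eps <= 2 * M ->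
  prob_lower_dev R F theta N eps <= expR (- (1 / (8 * M ^+ 2) * N%:R * eps ^+ 2)).
Proof.
move=> M_gt0 eps_gt0 eps_le; have M_neq0 : M != 0 by rewrite gt_eqF.
set lam := eps / (4 * M ^+ 2).
have lam_ge0 : 0 <= lam by rewrite divr_ge0 ?ltW // mulr_gt0 ?exprn_gt0.
have lamM : lam * M = eps / (4 * M) by rewrite /lam; field.
have lamM_le : lam * M <= 1/2 by rewrite lamM ler_pdivrMr ?mulr_gt0 //; lra.
have mgf_le : edge_mgf lam <= expR (2 * (lam * M) ^+ 2).
  by apply: le_trans (edge_mgf_le lam lam_ge0 lamM_le) (expR_ge1Dx _).
apply: le_trans (prob_lower_dev_le_mgf N lam eps lam_ge0) _.
apply: le_trans (_ : expR (- (lam * N%:R * eps)) * expR (2 * (lam * M) ^+ 2) ^+ N <= _).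
  apply: ler_wpM2l; first exact: expR_ge0.
  apply: lerXn2r mgf_le; rewrite nnegrE ?expR_ge0 //.
  by rewrite /edge_mgf sumr_ge0 // => p _; rewrite mulr_ge0 ?expR_ge0 ?edge_w_ge0.
rewrite -expRM_natl -expRD lamM /lam le_eqVlt; apply/orP; left; apply/eqP.
by congr expR; field.
Qed.

End Deviation.

Lemma prob_lower_dev_large_eps N (eps : R) : (1 <= N)%N -> (F + 2 + theta)%:R < eps ->
  prob_lower_dev R F theta N eps = 0.
Proof.
move=> N_ge1 eps_gt; rewrite /prob_lower_dev big1 // => eta _.
rewrite big1 // => X _; rewrite ifF ?mulr0 //; apply/negbTE; rewrite -ltNge.
have sum_ge : N%:R * (- (theta%:R : R)) <= phi_sum R F theta N eta X.
  rewrite mulr_natl -[in X in X <= _](card_ord N) -sumr_const.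
  by apply: ler_sum => j _; apply: phi_val_ge.
apply: lt_le_trans sum_ge; rewrite ltr_pM2l ?ltr0n //.
have /andP[_ Ep_le] := Ephi_bounds R F theta F_ge1.
by move: Ep_le eps_gt; rewrite !natrD; lra.
Qed.

End Chernoff.

Theorem lemma3 (R : realType) (F theta : nat) (hF : (1 <= F)%N) (htheta : (1 <= theta)%N) :
  exists C1 : R, exists2 c1 : R, 0 < c1 &
    forall (eps : R) (N : nat), 0 < eps -> (1 <= N)%N ->
      prob_lower_dev R F theta N eps <= C1 * expR (- (c1 * N%:R * eps ^+ 2)).
Proof.
set M : R := (F + 2 + theta)%:R.
have M_gt0 : 0 < M by rewrite ltr0n addn_gt0 addn_gt0 hF.
exists 1; exists (1 / (8 * M ^+ 2)); first by rewrite divr_gt0 ?mulr_gt0 ?exprn_gt0.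
move=> eps N eps_gt0 N_ge1; rewrite mul1r.
have [eps_le | eps_gt] := leP eps (2 * M).
  by apply: prob_lower_dev_small_eps => //; exact: edge_phi_dev_le.
rewrite prob_lower_dev_large_eps ?expR_ge0 //.
by apply: lt_trans eps_gt; rewrite -[X in X < _]mul1r ltr_pM2r //; lra.
Qed.
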